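(* Let $L$ be a locale and let $F$ be a sheaf of monomorphisms on $L_{+}$. For every $x \in F(i)$, the set $\{c \in L : x \in F(c)\}$ has a (unique) maximum element $s_x$; that is, $s_x = \bigvee_{x \in F(c)} c$ satisfies $x \in F(s_x)$.
   Context: A locale (frame) $L$ is a complete lattice in which finite meets distribute over arbitrary joins. It carries a Grothendieck topology in which a family $\{b_j \le a\}$ covers $a$ iff $\bigvee_j b_j = a$; a sieve on $a$ (a downward closed set of elements $\le a$) is covering iff its join is $a$. A presheaf on $L$ is a functor $L^{op}\to\mathbf{Set}$; it is a sheaf if $F(a)\to\varprojlim_{b\in R}F(b)$ is a bijection for every covering sieve $R$ of every $a$. Write $i$ for the bottom (initial) element of $L$, and $L_{+}=L\sqcup\{0\}$ for the locale obtained by adjoining a new bottom element $0<i$. A sheaf of monomorphisms on $L_{+}$ is a sheaf $F$ on $L_{+}$ such that for every relation $a\le b$ in $L$ the restriction $F(b)\to F(a)$ is injective. The set $F(i)$ is the generic fibre; for $c\in L$, since $F(c)\to F(i)$ is injective, we regard $F(c)$ as a subset of $F(i)$ and write $x\in F(c)$ for $x\in F(i)$ lying in the image of $F(c)\to F(i)$. *)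

Record Frame := {
  fcar :> Type;
  fle : fcar -> fcar -> Prop;
  fsup : (fcar -> Prop) -> fcar;
  fmeet : fcar -> fcar -> fcar;
  fle_refl : forall a, fle a a;
  fle_trans : forall a b c, fle a b -> fle b c -> fle a c;
  fle_antisym : forall a b, fle a b -> fle b a -> a = b;
  fsup_ub : forall (S : fcar -> Prop) a, S a -> fle a (fsup S);
  fsup_least : forall (S : fcar -> Prop) b, (forall a, S a -> fle a b) -> fle (fsup S) b;
  fmeet_l : forall a b, fle (fmeet a b) a;
  fmeet_r : forall a b, fle (fmeet a b) b;
  fmeet_glb : forall a b c, fle c a -> fle c b -> fle c (fmeet a b);
  fdistr : forall a (S : fcar -> Prop),
      fmeet a (fsup S) = fsup (fun c => exists s, S s /\ c = fmeet a s)
}.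

Arguments fle {_}.
Arguments fsup {_}.
Arguments fmeet {_}.

Definition fbot (L : Frame) : L := fsup (fun _ : L => False).

Lemma fbot_le (L : Frame) (c : L) : fle (fbot L) c.
Proof. apply fsup_least. intros a []. Qed.

Record Presheaf (T : Type) (le : T -> T -> Prop) := {
  sec : T -> Type;
  restr : forall a b, le a b -> sec b -> sec a;
  restr_id : forall a (p : le a a) x, restr a a p x = x;
  restr_comp : forall a b c (p : le a b) (q : le b c) (r : le a c) x,
      restr a b p (restr b c q x) = restr a c r x
}.

Arguments sec {_ _}.
Arguments restr {_ _} _ {_ _}.

Definition is_sieve {T} (le : T -> T -> Prop) (R : T -> Prop) (a : T) : Prop :=
  (forall b, R b -> le b a) /\ (forall b c, R b -> le c b -> R c).

Definition covers {T} (le : T -> T -> Prop) (R : T -> Prop) (a : T) : Prop :=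
  (forall b, R b -> le b a) /\ (forall u, (forall b, R b -> le b u) -> le a u).

Definition compatible {T le} (F : Presheaf T le) (R : T -> Prop)
    (s : forall b, R b -> sec F b) : Prop :=
  forall b c (hb : R b) (hc : R c) (p : le c b), restr F p (s b hb) = s c hc.

Definition is_sheaf {T le} (F : Presheaf T le) : Prop :=
  forall (a : T) (R : T -> Prop), is_sieve le R a -> covers le R a ->
    (forall x y : sec F a,
        (forall b (hb : R b) (p : le b a), restr F p x = restr F p y) -> x = y)
    /\
    (forall s : forall b, R b -> sec F b, compatible F R s ->
        exists x : sec F a, forall b (hb : R b) (p : le b a), restr F p x = s b hb).

(* L_+ = L with a new bottom element 0 (represented by None). *)
Definition Lplus (L : Frame) : Type := option L.

Definition le_plus (L : Frame) (u v : Lplus L) : Prop :=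
  match u, v with
  | None, _ => True
  | Some _, None => False
  | Some a, Some b => fle a b
  end.

Definition is_mono {L : Frame} (F : Presheaf (Lplus L) (le_plus L)) : Prop :=
  forall (a b : L) (p : le_plus L (Some a) (Some b)) (x y : sec F (Some b)),
    restr F p x = restr F p y -> x = y.

(* x in F(i) lies in F(c): x is in the image of F(c) -> F(i). *)
Definition in_fibre {L : Frame} (F : Presheaf (Lplus L) (le_plus L))
    (c : L) (x : sec F (Some (fbot L))) : Prop :=
  exists y : sec F (Some c),
    restr F (fbot_le L c : le_plus L (Some (fbot L)) (Some c)) y = x.

(* Proof idea: the elements below some c with x in F(c) form a sieve on s_x
   which covers it, since s_x is their join.  Over such an element u, choose
   any c >= u with x in F(c) and a y in F(c) over x, and restrict y to u; by
   injectivity of the restrictions to the generic fibre this does not depend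
   on the choices, so these sections form a compatible family.  Its gluing is
   an element of F(s_x) lying over x. *)

From Stdlib Require Import ClassicalEpsilon.

Lemma le_plus_refl (L : Frame) (u : Lplus L) : le_plus L u u.
Proof. destruct u as [a|]; [exact (fle_refl L a) | exact I]. Qed.

Lemma le_plus_trans (L : Frame) (u v w : Lplus L) :
  le_plus L u v -> le_plus L v w -> le_plus L u w.
Proof.
  destruct u as [a|], v as [b|], w as [c|]; simpl; try tauto.
  apply fle_trans.
Qed.

Notation generic_le L c := (fbot_le L c : le_plus L (Some (fbot L)) (Some c)).

Section FibreSheaf.

Variables (L : Frame) (F : Presheaf (Lplus L) (le_plus L)).
Hypothesis Hmono : is_mono F.

(* For u = 0 both restrictions factor through F(i); for u = b in L they are
   compared after the injective restriction F(b) -> F(i). *)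
Lemma restr_eq_of_generic_eq (c1 c2 : L)
    (y1 : sec F (Some c1)) (y2 : sec F (Some c2)) (u : Lplus L)
    (p1 : le_plus L u (Some c1)) (p2 : le_plus L u (Some c2)) :
  restr F (generic_le L c1) y1 = restr F (generic_le L c2) y2 ->
  restr F p1 y1 = restr F p2 y2.
Proof.
  intro Hgen. destruct u as [b|].
  - apply (Hmono (fbot L) b (fbot_le L b)).
    rewrite (restr_comp _ _ F _ _ _ _ _ (generic_le L c1)).
    rewrite (restr_comp _ _ F _ _ _ _ _ (generic_le L c2)).
    exact Hgen.
  - assert (q : le_plus L None (Some (fbot L))) by exact I.
    rewrite <- (restr_comp _ _ F _ _ _ q (generic_le L c1) p1).
    rewrite <- (restr_comp _ _ F _ _ _ q (generic_le L c2) p2).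
    now rewrite Hgen.
Qed.

Variable x : sec F (Some (fbot L)).

Lemma in_fibre_bot : in_fibre F (fbot L) x.
Proof. exists x. apply restr_id. Qed.

Definition fibre_sieve (u : Lplus L) : Prop :=
  exists c, in_fibre F c x /\ le_plus L u (Some c).

Let s := fsup (fun c : L => in_fibre F c x).

Lemma fibre_sieve_is_sieve : is_sieve (le_plus L) fibre_sieve (Some s).
Proof.
  split.
  - intros u [c [Hc Huc]].
    apply (le_plus_trans L u (Some c)); [exact Huc|].
    exact (fsup_ub L _ c Hc).
  - intros u v [c [Hc Huc]] Hvu.
    exists c. split; [exact Hc|]. exact (le_plus_trans L v u _ Hvu Huc).
Qed.

Lemma fibre_sieve_covers : covers (le_plus L) fibre_sieve (Some s).
Proof.
  split; [apply fibre_sieve_is_sieve|].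
  intros [a|] Hub.
  - apply fsup_least. intros c Hc.
    apply (Hub (Some c)). exists c. split; [exact Hc | apply fle_refl].
  - apply (Hub (Some (fbot L))).
    exists (fbot L). split; [exact in_fibre_bot | apply fle_refl].
Qed.

Definition fibre_family (u : Lplus L) (hu : fibre_sieve u) : sec F u :=
  let (c, Hc) := constructive_indefinite_description _ hu in
  let (y, _) := constructive_indefinite_description _ (proj1 Hc) in
  restr F (proj2 Hc) y.

Lemma fibre_family_spec (u : Lplus L) (hu : fibre_sieve u) :
  exists c (y : sec F (Some c)) (p : le_plus L u (Some c)),
    restr F (generic_le L c) y = x /\ fibre_family u hu = restr F p y.
Proof.
  unfold fibre_family.
  destruct (constructive_indefinite_description _ hu) as [c Hc].
  destruct (constructive_indefinite_description _ (proj1 Hc)) as [y Hy].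
  now exists c, y, (proj2 Hc).
Qed.

Lemma fibre_family_compatible : compatible F fibre_sieve fibre_family.
Proof.
  intros u v hu hv Hvu.
  destruct (fibre_family_spec u hu) as [c1 [y1 [p1 [Hy1 ->]]]].
  destruct (fibre_family_spec v hv) as [c2 [y2 [p2 [Hy2 ->]]]].
  rewrite (restr_comp _ _ F _ _ _ Hvu p1 (le_plus_trans L _ _ _ Hvu p1)).
  apply restr_eq_of_generic_eq. congruence.
Qed.

Lemma fibre_family_generic (h : fibre_sieve (Some (fbot L))) :
  fibre_family (Some (fbot L)) h = x.
Proof.
  destruct (fibre_family_spec _ h) as [c [y [p [Hy ->]]]].
  rewrite <- (restr_id _ _ F _ (le_plus_refl L (Some (fbot L))) x).
  apply restr_eq_of_generic_eq. rewrite Hy. symmetry. apply restr_id.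
Qed.

End FibreSheaf.

Theorem lemma11 (L : Frame) (F : Presheaf (Lplus L) (le_plus L))
  (HF : is_sheaf F) (Hmono : is_mono F) (x : sec F (Some (fbot L))) :
  let s := fsup (fun c : L => in_fibre F c x) in
  in_fibre F s x /\ (forall c : L, in_fibre F c x -> fle c s).
Proof.
  intro s. split; [| intros c Hc; exact (fsup_ub L _ c Hc)].
  destruct (HF _ _ (fibre_sieve_is_sieve L F x) (fibre_sieve_covers L F x))
    as [_ Hglue].
  destruct (Hglue _ (fibre_family_compatible L F Hmono x)) as [z Hz].
  exists z.
  assert (h : fibre_sieve L F x (Some (fbot L))).
  { exists (fbot L). split; [exact (in_fibre_bot L F x) | apply fle_refl]. }
  rewrite (Hz _ h). exact (fibre_family_generic L F Hmono x h).
Qed.
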